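(* Consider the single-hop VAoI system described in the context, operated under the threshold policy with threshold $\Delta_T\in\{0,1,2,\dots\}$, and let $\beta=1-(1-p_s)(1-p_g)$. If $\Delta_T\in\{0,1\}$, the steady-state probabilities of the VAoI are the same as under the randomized stationary policy with transmission probability $1$, namely $\mu_0=\frac{p_s(1-p_g)}{\beta}$, $\mu_1=\frac{p_sp_g}{\beta^2}$, and $\mu_n=\left[\frac{(1-p_s)p_g}{\beta}\right]^{n-1}\mu_1$ for $n\ge2$. If $\Delta_T\ge2$, \[ \mu_n=\begin{cases}\dfrac{p_s(1-p_g)}{(\Delta_T-1)p_s+\beta}, & n=0,\\[2mm] \dfrac{p_s}{(\Delta_T-1)p_s+\beta}, & 1\le n\le\Delta_T-1,\\[2mm] \dfrac{p_g}{\beta}\mu_{\Delta_T-1}, & n=\Delta_T,\\[2mm] \left[\dfrac{(1-p_s)p_g}{\beta}\right]^{n-\Delta_T}\mu_{\Delta_T}, & n\ge\Delta_T+1.\end{cases} \]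
   Context: Time is slotted, $t\in\{0,1,2,\dots\}$. An information source generates a new version in each slot independently with probability $p_g$; let $G_t\in\{0,1\}$ indicate whether a new version is generated in slot $t$. A transmitter holding the current source version may, in each slot $t$, attempt to send it to a receiver over an erasure channel; $a(t)\in\{0,1\}$ indicates an attempt, and each attempt succeeds independently with probability $p_s$. The Version Age of Information (VAoI) $\Delta(t)$ (number of versions by which the receiver lags the source) evolves as $\Delta(t+1)=G_t$ if $a(t)=1$ and the attempt succeeds, and $\Delta(t+1)=\Delta(t)+G_t$ otherwise. All version-generation and channel events are mutually independent. Assume $0<p_s<1$, $0<p_g<1$. The threshold policy with threshold $\Delta_T$ sets $a(t)=1$ if $\Delta(t)\ge\Delta_T$ and $a(t)=0$ otherwise; $\Delta(t)$ is then an ergodic Markov chain and $\mu_n$ is its stationary probability of state $n$. *)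

From Stdlib Require Import Reals Lra Arith.
From Coquelicot Require Import Coquelicot.
Open Scope R_scope.

Definition bprob (p : R) (b : bool) : R := if b then p else 1 - p.

Definition act (DT m : nat) : bool := Nat.leb DT m.

(* Next VAoI from state m, given generation indicator g (G_t = 1 iff g)
   and channel success indicator c (attempt succeeds iff c, if attempted). *)
Definition next_state (DT m : nat) (g c : bool) : nat :=
  if andb (act DT m) c then (if g then 1%nat else 0%nat)
  else (m + (if g then 1 else 0))%nat.

Definition trans (ps pg : R) (DT m n : nat) : R :=
  bprob pg true  * bprob ps true  * (if Nat.eqb (next_state DT m true true) n then 1 else 0)
+ bprob pg true  * bprob ps false * (if Nat.eqb (next_state DT m true false) n then 1 else 0)
+ bprob pg false * bprob ps true  * (if Nat.eqb (next_state DT m false true) n then 1 else 0)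
+ bprob pg false * bprob ps false * (if Nat.eqb (next_state DT m false false) n then 1 else 0).

Definition stationary (ps pg : R) (DT : nat) (mu : nat -> R) : Prop :=
  (forall n, 0 <= mu n) /\
  is_series mu 1 /\
  (forall n, is_series (fun m => mu m * trans ps pg DT m n) (mu n)).

Definition beta (ps pg : R) : R := 1 - (1 - ps) * (1 - pg).

Definition mu_formula (ps pg : R) (DT n : nat) : R :=
  let b := beta ps pg in
  let r := (1 - ps) * pg / b in
  if Nat.leb DT 1 then
    (match n with
     | O => ps * (1 - pg) / b
     | S k => r ^ k * (ps * pg / b ^ 2)
     end)
  else
    let D := INR (DT - 1) * ps + b in
    if Nat.eqb n 0 then ps * (1 - pg) / D
    else if Nat.leb n (DT - 1) then ps / D
    else r ^ (n - DT) * (pg / b * (ps / D)).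

(* Summing the one-step flow into a state n, a successful transmission from an
   active state (m >= Delta_T) lands in 0 or 1, so stationarity amounts to balance
   equations involving mu only through mu (n - 1), mu n and the active mass
   T = sum_(m >= Delta_T) mu m.  As the self-loop probability is below 1, these
   equations determine mu recursively from T: mu is constant on the passive states
   1 .. Delta_T - 1 and geometric with ratio (1 - ps) pg / beta on the active
   ones.  Normalisation then forces T = pg / ((Delta_T - 1) ps + beta).
   Threshold 0 gives the same chain as threshold 1: in state 0 a successful
   transmission changes nothing. *)

From Stdlib Require Import Reals Lra Lia Arith FunctionalExtensionality.
From Coquelicot Require Import Coquelicot.
Open Scope R_scope.

Lemma is_series_R0 : is_series (fun _ : nat => 0) 0.
Proof.
  apply (filterlim_ext (fun _ => 0)); [|apply filterlim_const].
  intros N; rewrite sum_n_const; ring.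
Qed.

Lemma is_series_indicator (k : nat) (a : nat -> R) :
  is_series (fun m => if Nat.eqb m k then a m else 0) (a k).
Proof.
  revert a; induction k as [|k IH]; intros a; apply is_series_decr_1; cbn [Nat.eqb].
  - change (is_series (fun _ => 0) (a 0%nat - a 0%nat)).
    rewrite Rminus_diag; exact is_series_R0.
  - change (is_series (fun m => if Nat.eqb m k then a (S m) else 0) (a (S k) + - 0)).
    rewrite Ropp_0, Rplus_0_r; exact (IH (fun m => a (S m))).
Qed.

Lemma is_series_shift (a : nat -> R) (k : nat) (l L : R) :
  is_series (fun j => a (S k + j)%nat) l -> sum_n a k + l = L -> is_series a L.
Proof.
  intros H <-; apply (is_series_decr_n a (S k)); [lia|].
  change (is_series (fun j => a (S k + j)%nat) (sum_n a k + l - sum_n a k)).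
  now replace (sum_n a k + l - sum_n a k) with l by ring.
Qed.

Definition ngen_prob (pg : R) (n : nat) : R :=
  match n with O => 1 - pg | 1%nat => pg | _ => 0 end.

Definition keep_prob (ps : R) (DT m : nat) : R := if act DT m then 1 - ps else 1.

Definition active_part (DT : nat) (mu : nat -> R) (m : nat) : R :=
  if act DT m then mu m else 0.

Definition inflow (ps pg : R) (DT : nat) (mu : nat -> R) (T : R) (n : nat) : R :=
  ps * ngen_prob pg n * T
  + match n with O => 0 | S m => pg * keep_prob ps DT m * mu m end
  + (1 - pg) * keep_prob ps DT n * mu n.

Lemma trans_threshold0 (ps pg : R) : trans ps pg 0 = trans ps pg 1.
Proof.
  apply functional_extensionality; intros [|m]; [|reflexivity].
  apply functional_extensionality; intros n.
  unfold trans, next_state; cbn; now destruct (Nat.eqb 1 n), (Nat.eqb 0 n).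
Qed.

Lemma stationary_threshold0 (ps pg : R) (mu : nat -> R) :
  stationary ps pg 0 mu <-> stationary ps pg 1 mu.
Proof. unfold stationary; now rewrite trans_threshold0. Qed.

Lemma mul_trans_split (ps pg : R) (DT : nat) (mu : nat -> R) (m n : nat) :
  mu m * trans ps pg DT m n =
  ps * ngen_prob pg n * active_part DT mu m
  + (if Nat.eqb (S m) n then pg * keep_prob ps DT m * mu m else 0)
  + (if Nat.eqb m n then (1 - pg) * keep_prob ps DT m * mu m else 0).
Proof.
  unfold trans, next_state, active_part, keep_prob, bprob, ngen_prob.
  destruct (act DT m); cbn; destruct n as [|[|n]];
  repeat match goal with |- context [Nat.eqb ?a ?b] => destruct (Nat.eqb_spec a b) end;
  try lia; ring.
Qed.

Lemma is_series_inflow (ps pg : R) (DT : nat) (mu : nat -> R) (T : R) (n : nat) :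
  is_series (active_part DT mu) T ->
  is_series (fun m => mu m * trans ps pg DT m n) (inflow ps pg DT mu T n).
Proof.
  intros HT; eapply is_series_ext; [intros m; symmetry; apply mul_trans_split|].
  apply (is_series_plus (V := R_NormedModule)); [apply (is_series_plus (V := R_NormedModule))|].
  - now apply (is_series_scal (V := R_NormedModule)).
  - destruct n as [|n].
    + exact is_series_R0.
    + exact (is_series_indicator n (fun m => pg * keep_prob ps DT m * mu m)).
  - exact (is_series_indicator n (fun m => (1 - pg) * keep_prob ps DT m * mu m)).
Qed.

Lemma is_series_active_part (DT : nat) (mu : nat -> R) :
  (forall n, 0 <= mu n) -> is_series mu 1 ->
  is_series (active_part DT mu) (Series (active_part DT mu)).
Proof.
  intros Hpos H1; apply Series_correct.
  apply (ex_series_le (V := R_CompleteNormedModule) _ mu); [|now exists 1].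
  intros m; unfold active_part; destruct (act DT m); cbn; change abs with Rabs.
  - rewrite Rabs_pos_eq; [lra|apply Hpos].
  - rewrite Rabs_R0; apply Hpos.
Qed.

Lemma stationary_balance (ps pg : R) (DT : nat) (mu : nat -> R) :
  stationary ps pg DT mu <->
  (forall n, 0 <= mu n) /\ is_series mu 1 /\
  (forall n, mu n = inflow ps pg DT mu (Series (active_part DT mu)) n).
Proof.
  split; intros (Hpos & H1 & Hbal); repeat split; auto; intros n;
  pose proof (is_series_inflow ps pg DT mu _ n (is_series_active_part DT mu Hpos H1)) as Hin.
  - now rewrite <- (is_series_unique _ _ (Hbal n)), (is_series_unique _ _ Hin).
  - now rewrite (Hbal n).
Qed.

Definition ratio (ps pg : R) : R := (1 - ps) * pg / beta ps pg.

(* With [k = Delta_T - 1]: the solution of the balance equations whose mass on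
   the active states [m > k] is [T]. *)
Definition balance_solution (ps pg : R) (k : nat) (T : R) (n : nat) : R :=
  match n with
  | O => ps * (1 - pg) / pg * T
  | S _ => if Nat.leb n k then ps / pg * T
           else ratio ps pg ^ (n - S k) * (ps / beta ps pg * T)
  end.

Section Balance.

Variables ps pg : R.
Hypotheses (hps : 0 < ps < 1) (hpg : 0 < pg < 1).

Lemma beta_pos : 0 < beta ps pg.
Proof. unfold beta; nra. Qed.

Lemma one_minus_ratio : 1 - ratio ps pg = ps / beta ps pg.
Proof. pose proof beta_pos; unfold ratio, beta in *; field; lra. Qed.

Lemma ratio_bounds : 0 <= ratio ps pg < 1.
Proof.
  pose proof beta_pos; pose proof one_minus_ratio.
  assert (0 < ps / beta ps pg) by (apply Rdiv_lt_0_compat; lra).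
  split; [|lra]; apply Rmult_le_pos; [nra|left; now apply Rinv_0_lt_compat].
Qed.

Lemma inflow_unique (DT : nat) (mu nu : nat -> R) (T : R) :
  (forall n, mu n = inflow ps pg DT mu T n) ->
  (forall n, nu n = inflow ps pg DT nu T n) ->
  forall n, mu n = nu n.
Proof.
  (* the balance at [n] fixes [mu n] given [mu (n - 1)], the self-loop
     probability [c] being at most [1 - pg < 1] *)
  intros Hmu Hnu n; induction n as [|n IH];
    match goal with |- mu ?n = _ => pose proof (Hmu n) as En; pose proof (Hnu n) as Fn end;
    unfold inflow in En, Fn; [|rewrite IH in En];
    match type of En with _ = _ + _ + ?c * _ =>
      assert (c <= 1 - pg) by (unfold keep_prob; destruct act; nra); set c in * end;
    nra.
Qed.

Variable k : nat.

Lemma keep_prob_passive (m : nat) : (m <= k)%nat -> keep_prob ps (S k) m = 1.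
Proof. intros Hm; unfold keep_prob, act; now rewrite (proj2 (Nat.leb_gt _ _)) by lia. Qed.

Lemma keep_prob_active (m : nat) : (k < m)%nat -> keep_prob ps (S k) m = 1 - ps.
Proof. intros Hm; unfold keep_prob, act; now rewrite (proj2 (Nat.leb_le _ _)) by lia. Qed.

Variable T : R.

Let mu := balance_solution ps pg k T.

Lemma balance_solution_feed (m : nat) : (m <= k)%nat ->
  ps * ngen_prob pg (S m) * T + pg * keep_prob ps (S k) m * mu m = ps * T.
Proof.
  intros Hm; rewrite keep_prob_passive by exact Hm.
  unfold mu, balance_solution; destruct m as [|m]; cbn [ngen_prob].
  - field; lra.
  - rewrite (proj2 (Nat.leb_le _ _)) by lia; field; lra.
Qed.

Lemma balance_solution_inflow (n : nat) : mu n = inflow ps pg (S k) mu T n.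
Proof.
  pose proof beta_pos.
  unfold inflow; destruct n as [|m].
  - rewrite keep_prob_passive by lia; unfold mu, balance_solution; cbn; field; lra.
  - destruct (le_lt_dec m k) as [Hm|Hm].
    + rewrite balance_solution_feed by exact Hm.
      unfold mu, balance_solution.
      destruct (Nat.leb_spec (S m) k).
      * rewrite keep_prob_passive by lia; field; lra.
      * rewrite keep_prob_active by lia.
        replace (S m - S k)%nat with 0%nat by lia; unfold beta in *; field; lra.
    + rewrite !keep_prob_active by lia.
      destruct m as [|m]; [lia|].
      unfold mu, balance_solution, ngen_prob.
      rewrite !(proj2 (Nat.leb_gt _ _)) by lia.
      replace (S (S m) - S k)%nat with (S (S m - S k)) by lia.
      unfold ratio; cbn [pow]; unfold beta in *; field; lra.
Qed.

Lemma balance_solution_tail (j : nat) :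
  mu (S k + j) = ratio ps pg ^ j * (ps / beta ps pg * T).
Proof.
  unfold mu, balance_solution; cbn [Nat.add].
  rewrite (proj2 (Nat.leb_gt _ _)) by lia.
  now replace (S (k + j) - S k)%nat with j by lia.
Qed.

Lemma balance_solution_partial_sum (j : nat) : (j <= k)%nat ->
  sum_n mu j = ps * (1 - pg) / pg * T + INR j * (ps / pg * T).
Proof.
  induction j as [|j IH]; intros Hj.
  - rewrite sum_O; cbn; ring.
  - rewrite sum_Sn, IH by lia; unfold mu, balance_solution.
    rewrite (proj2 (Nat.leb_le _ _)) by lia.
    rewrite S_INR; cbn; ring.
Qed.

Lemma is_series_geometric_tail :
  is_series (fun j => ratio ps pg ^ j * (ps / beta ps pg * T)) T.
Proof.
  pose proof ratio_bounds; pose proof beta_pos.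
  assert (Hgeom : Rabs (ratio ps pg) < 1) by (rewrite Rabs_pos_eq; lra).
  pose proof (is_series_scal_r (ps / beta ps pg * T) _ _ (is_series_geom _ Hgeom)) as H1.
  now replace (/ (1 - ratio ps pg) * (ps / beta ps pg * T)) with T in H1
    by (rewrite one_minus_ratio; field; lra).
Qed.

Lemma is_series_balance_solution :
  is_series mu ((INR k * ps + beta ps pg) / pg * T).
Proof.
  apply (is_series_shift _ k T).
  - eapply is_series_ext; [intros j; symmetry; apply balance_solution_tail|].
    exact is_series_geometric_tail.
  - rewrite balance_solution_partial_sum by lia; unfold beta; field; lra.
Qed.

Lemma is_series_balance_solution_active : is_series (active_part (S k) mu) T.
Proof.
  apply (is_series_shift _ k T).
  - eapply is_series_ext; [|exact is_series_geometric_tail].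
    intros j; unfold active_part, act; rewrite (proj2 (Nat.leb_le _ _)) by lia.
    symmetry; apply balance_solution_tail.
  - rewrite (sum_n_ext_loc _ (fun _ => 0)), sum_n_const; [ring|].
    intros m Hm; unfold active_part, act; now rewrite (proj2 (Nat.leb_gt _ _)) by lia.
Qed.

Lemma balance_solution_nonneg (n : nat) : 0 <= T -> 0 <= mu n.
Proof.
  intros HT; pose proof beta_pos; pose proof ratio_bounds.
  unfold mu, balance_solution, Rdiv; destruct n as [|n]; [|destruct Nat.leb].
  all: repeat apply Rmult_le_pos; try apply pow_le; try lra;
       apply Rlt_le, Rinv_0_lt_compat; lra.
Qed.

End Balance.

Lemma mu_formula_balance_solution (ps pg : R) (k n : nat) :
  0 < ps < 1 -> 0 < pg < 1 ->
  mu_formula ps pg (S k) n = balance_solution ps pg k (pg / (INR k * ps + beta ps pg)) n.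
Proof.
  intros hps hpg; pose proof (beta_pos ps pg hps hpg).
  assert (0 < INR k * ps + beta ps pg) by (pose proof (pos_INR k); nra).
  unfold mu_formula, balance_solution, ratio.
  destruct k as [|k], n as [|n]; cbn [Nat.leb Nat.eqb Nat.sub].
  - change (INR 0) with 0; field; lra.
  - change (INR 0) with 0; rewrite Nat.sub_0_r; field; lra.
  - field; lra.
  - destruct Nat.leb; field; lra.
Qed.

Lemma stationary_iff_balance_solution (ps pg : R) (k : nat) (mu : nat -> R) :
  0 < ps < 1 -> 0 < pg < 1 ->
  stationary ps pg (S k) mu <->
  forall n, mu n = balance_solution ps pg k (pg / (INR k * ps + beta ps pg)) n.
Proof.
  intros hps hpg; pose proof (beta_pos ps pg hps hpg).
  set (D := INR k * ps + beta ps pg).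
  assert (HD : 0 < D) by (pose proof (pos_INR k); unfold D; nra).
  rewrite stationary_balance; split.
  - intros (_ & H1 & Hbal).
    set (T := Series (active_part (S k) mu)) in Hbal.
    pose proof (inflow_unique ps pg hps hpg _ _ _ _ Hbal
                  (balance_solution_inflow ps pg hps hpg k T)) as Hsol.
    assert (HT : T = pg / D).
    { assert (Hmass : is_series mu (D / pg * T)).
      { eapply is_series_ext; [intros n; symmetry; apply Hsol|].
        now apply is_series_balance_solution. }
      apply is_series_unique in H1, Hmass; rewrite H1 in Hmass.
      replace T with (pg / D * (D / pg * T)) by (field; lra); rewrite <- Hmass; ring. }
    intros n; now rewrite Hsol, HT.
  - intros Hmu; apply functional_extensionality in Hmu; subst mu.
    rewrite (is_series_unique _ _ (is_series_balance_solution_active ps pg hps hpg k _)).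
    split; [|split].
    + intros n; apply balance_solution_nonneg; auto.
      apply Rlt_le, Rdiv_lt_0_compat; lra.
    + pose proof (is_series_balance_solution ps pg hps hpg k (pg / D)) as Hmass.
      fold D in Hmass; now replace (D / pg * (pg / D)) with 1 in Hmass by (field; lra).
    + apply balance_solution_inflow; auto.
Qed.

Theorem proposition3 (ps pg : R) (DT : nat)
  (hps : 0 < ps < 1) (hpg : 0 < pg < 1) (mu : nat -> R) :
  stationary ps pg DT mu <-> (forall n : nat, mu n = mu_formula ps pg DT n).
Proof.
  assert (Hsucc : forall k, stationary ps pg (S k) mu <->
                           (forall n, mu n = mu_formula ps pg (S k) n)).
  { intros k; rewrite stationary_iff_balance_solution by auto.
    split; intros H n; rewrite H; [symmetry|]; now apply mu_formula_balance_solution. }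
  destruct DT as [|k]; [rewrite stationary_threshold0|]; apply Hsucc.
Qed.
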